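(* Let $0<b<B$. For every instance $\langle A,f,c\rangle$ (with $f$ monotone) such that $p(\{i\})\le b$ for all $i\in A$, $$\frac{\textsc{Max-Profit}(B)}{\textsc{Max-Profit}(b)}\le\frac{\textsc{Max-Reward}(B)}{\textsc{Max-Reward}(b)}.$$
   Context: An instance $\langle A,f,c\rangle$ consists of a finite set $A$ of agents, a monotone nondecreasing $f:2^A\to[0,1]$, and costs $c_i\ge0$. For $S\subseteq A$, $i\in S$: $f_S(i)=f(S)-f(S\setminus\{i\})$; $p(S)=\sum_{i\in S}c_i/f_S(i)$ (conventions: $0$ if $c_i=0=f_S(i)$, $\infty$ if $c_i>0=f_S(i)$); the profit is $g(S)=(1-p(S))f(S)$. $\textsc{Max-Profit}(B)=\max\{g(S):p(S)\le B\}$ and $\textsc{Max-Reward}(B)=\max\{f(S):p(S)\le B\}$. *)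

From HB Require Import structures.
From mathcomp Require Import all_boot all_order all_algebra.
From mathcomp Require Import constructive_ereal.
Set Implicit Arguments. Unset Strict Implicit. Unset Printing Implicit Defensive.
Import Order.TTheory GRing.Theory Num.Theory.
Local Open Scope ring_scope.

Section Contract.
Variables (R : realFieldType) (A : finType).
Variables (f : {set A} -> R) (c : A -> R).

Definition marg (S : {set A}) (i : A) : R := f S - f (S :\ i).

(* p(S) = sum_{i in S} c_i / f_S(i), with value +oo when some c_i > 0 = f_S(i);
   when c_i = 0 = f_S(i) the term c_i / f_S(i) is 0 (this is also MathComp's
   convention x / 0 = 0). *)
Definition price (S : {set A}) : \bar R :=
  if [exists i in S, (0 < c i) && (marg S i == 0)] then +oo%E
  else (\sum_(i in S) c i / marg S i)%:E.

(* g(S) = (1 - p(S)) f(S); only used for sets with finite price. *)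
Definition profit (S : {set A}) : R := (1 - fine (price S)) * f S.

(* The empty set is always feasible for B >= 0 (p(empty) = 0), so using its value as
   the initial element of the max is harmless. *)
Definition MaxProfit (B : R) : R :=
  \big[Num.max/profit set0]_(S : {set A} | (price S <= B%:E)%E) profit S.

Definition MaxReward (B : R) : R :=
  \big[Num.max/f set0]_(S : {set A} | (price S <= B%:E)%E) f S.

End Contract.

From Pilot Require Import Defs.
From HB Require Import structures.
From mathcomp Require Import all_boot all_order all_algebra.
From mathcomp Require Import constructive_ereal.
From mathcomp Require Import lra.
Import Order.TTheory GRing.Theory Num.Theory.
Local Open Scope ring_scope.

(* Write P(x), V(x) for Max-Profit(x), Max-Reward(x). A set of price q has
   profit (1 - q) f(S), so the sets feasible for B but not for b have profit at
   most (1 - b) V(B), while scaling the optimum of V(b) gives (1 - b) V(b) <= P(b).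
   Hence P(B) <= max (P(b), (1 - b) V(B)), and both alternatives bound
   P(B) / P(b) by V(B) / V(b), since V(b) <= V(B). *)

Lemma ler_ratio_max (R : realFieldType) (pb pB rb rB k : R) :
  0 <= pb -> pb <= rb -> rb <= rB -> k * rb <= pb ->
  pB <= Num.max pb (k * rB) -> pB / pb <= rB / rb.
Proof.
move=> pb_ge0 pb_le_rb rb_le_rB krb_le_pb.
have [->|pb_neq0] := eqVneq pb 0.
  by rewrite invr0 mulr0 divr_ge0 // (le_trans pb_ge0 (le_trans pb_le_rb _)).
have pb_gt0 : 0 < pb by rewrite lt_def pb_neq0.
have rb_gt0 : 0 < rb := lt_le_trans pb_gt0 pb_le_rb.
rewrite ler_pdivrMr // mulrAC ler_pdivlMr // le_max => /orP[] pB_le.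
  by nra.
have [k_ge0|k_lt0] := leP 0 k; nra.
Qed.

Section Contract.
Variables (R : realFieldType) (A : finType) (f : {set A} -> R) (c : A -> R).
Hypothesis f_ge0 : forall S, 0 <= f S.
Hypothesis f_mono : forall S T : {set A}, S \subset T -> f S <= f T.
Hypothesis c_ge0 : forall i, 0 <= c i.

Local Notation price := (price f c).
Local Notation profit := (profit f c).
Local Notation MaxProfit := (MaxProfit f c).
Local Notation MaxReward := (MaxReward f c).

Lemma price_set0 : price set0 = 0%:E.
Proof.
rewrite /Defs.price; case: ifP => [/existsP[i]|_]; first by rewrite inE.
by rewrite big_set0.
Qed.

Lemma profit_set0 : profit set0 = f set0.
Proof. by rewrite /Defs.profit price_set0 subr0 mul1r. Qed.

(* The junk value [fine +oo = 0] makes this hold for every set. *)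
Lemma fine_price_ge0 S : 0 <= fine (price S).
Proof.
rewrite /Defs.price; case: ifP => // _ /=.
apply: sumr_ge0 => i _; apply: divr_ge0 => //.
by rewrite /marg subr_ge0 f_mono // subsetDl.
Qed.

Lemma price_fin {S x} : (price S <= x%:E)%E -> price S = (fine (price S))%:E.
Proof. by rewrite /Defs.price; case: ifP. Qed.

Lemma fine_price_le {S x} : (price S <= x%:E)%E -> fine (price S) <= x.
Proof. by move=> Sx; move: (Sx); rewrite (price_fin Sx) lee_fin. Qed.

Lemma price_le_of_fine {S x y} :
  (price S <= y%:E)%E -> fine (price S) <= x -> (price S <= x%:E)%E.
Proof. by move=> Sy; rewrite (price_fin Sy) lee_fin. Qed.

Lemma profit_le_scaled {S x} : x <= fine (price S) -> profit S <= (1 - x) * f S.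
Proof. by move=> x_le; rewrite /Defs.profit ler_wpM2r // lerB. Qed.

Lemma scaled_le_profit {S x} : fine (price S) <= x -> (1 - x) * f S <= profit S.
Proof. by move=> le_x; rewrite /Defs.profit ler_wpM2r // lerB. Qed.

Lemma profit_le_reward S : profit S <= f S.
Proof. by rewrite -[leRHS]mul1r /Defs.profit ler_wpM2r // gerBl fine_price_ge0. Qed.

Lemma MaxProfit_ge0 x : 0 <= MaxProfit x.
Proof. by apply: le_trans (f_ge0 set0) _; rewrite -profit_set0 bigmax_ge_id. Qed.

Lemma le_MaxReward {x S} : (price S <= x%:E)%E -> f S <= MaxReward x.
Proof. exact: le_bigmax_cond. Qed.

Lemma le_MaxProfit {x S} : (price S <= x%:E)%E -> profit S <= MaxProfit x.
Proof. exact: le_bigmax_cond. Qed.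

Lemma MaxReward_le_homo x y : x <= y -> MaxReward x <= MaxReward y.
Proof.
move=> le_xy; apply: bigmax_le => [|S Sx]; first exact: bigmax_ge_id.
by apply: le_MaxReward; apply: le_trans Sx _; rewrite lee_fin.
Qed.

Lemma MaxProfit_le_MaxReward x : MaxProfit x <= MaxReward x.
Proof.
apply: bigmax_le => [|S Sx]; first by rewrite profit_set0 bigmax_ge_id.
exact: le_trans (profit_le_reward S) (le_MaxReward Sx).
Qed.

Lemma scaled_MaxReward_le_MaxProfit x :
  0 <= x -> (1 - x) * MaxReward x <= MaxProfit x.
Proof.
move=> x_ge0; apply: (big_ind (fun v => (1 - x) * v <= MaxProfit x)).
- apply: (le_trans (y := profit set0)); last exact: bigmax_ge_id.
  by rewrite scaled_le_profit // price_set0.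
- by move=> u v uP vP; rewrite /Num.max; case: ifP.
- by move=> S Sx; rewrite (le_trans (scaled_le_profit (fine_price_le Sx)))
    ?le_MaxProfit.
Qed.

Lemma MaxProfit_le_max x y :
  MaxProfit y <= Num.max (MaxProfit x) ((1 - x) * MaxReward y).
Proof.
apply: bigmax_le => [|S Sy]; first by rewrite le_max /Defs.MaxProfit bigmax_ge_id.
rewrite le_max; have [Sx|xS] := leP (fine (price S)) x.
  by rewrite le_MaxProfit // (price_le_of_fine Sy).
have profitS := profit_le_scaled (ltW xS).
have [x_le1|x_gt1] := leP x 1.
  apply/orP; right; apply: le_trans profitS _.
  by rewrite ler_wpM2l ?subr_ge0 ?le_MaxReward.
apply/orP; left; apply: le_trans profitS (le_trans _ (MaxProfit_ge0 x)).
by rewrite nmulr_rle0 ?subr_lt0.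
Qed.

End Contract.

Theorem mainTheorem17 (R : realFieldType) (b B : R) (A : finType)
  (f : {set A} -> R) (c : A -> R) :
  0 < b -> b < B ->
  (forall S : {set A}, 0 <= f S <= 1) ->
  (forall S T : {set A}, S \subset T -> f S <= f T) ->
  (forall i : A, 0 <= c i) ->
  (forall i : A, (price f c [set i] <= b%:E)%E) ->
  MaxProfit f c B / MaxProfit f c b <= MaxReward f c B / MaxReward f c b.
Proof.
move=> gt0b ltbB f01 f_mono c_ge0 _.
have f_ge0 S : 0 <= f S by case/andP: (f01 S).
apply: (@ler_ratio_max _ _ _ _ _ (1 - b)).
- exact: MaxProfit_ge0.
- exact: MaxProfit_le_MaxReward.
- exact: MaxReward_le_homo (ltW ltbB).
- exact: scaled_MaxReward_le_MaxProfit (ltW gt0b).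
- exact: MaxProfit_le_max.
Qed.
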